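(* Let $f\in\mathbb R[x_1,\dots,x_n]$ be not identically zero and let $s(x)=\sum_{j=1}^n x_j$. Then the polynomial $s f$ has at least $n$ distinct monomials (with nonzero coefficients). *)

From HB Require Import structures.
From mathcomp Require Import all_boot all_order all_algebra.
From mathcomp Require Import reals.
From mathcomp Require Export mpoly.
Set Implicit Arguments. Unset Strict Implicit. Unset Printing Implicit Defensive.
Import Order.TTheory GRing.Theory Num.Theory.
Local Open Scope ring_scope.

Definition sum_vars (R : realType) (n : nat) : {mpoly R[n]} := \sum_(j < n) 'X_j.

(* For each variable x_j pick a monomial M_j of f whose x_j-exponent is maximal.
   The coefficient of x_j M_j in s f is then f_{M_j} <> 0: any other contribution
   x_k * (x_j M_j / x_k) with k <> j would need a monomial of f with a larger
   x_j-exponent.  The monomials x_j M_j are pairwise distinct, since the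
   x_j-exponent of x_j M_j exceeds that of every x_k M_k. *)

From HB Require Import structures.
From mathcomp Require Import all_boot all_order all_algebra.
From mathcomp Require Import reals.
From mathcomp Require Import mpoly.
Import GRing.Theory.
Local Open Scope ring_scope.

Lemma exists_argmax_seq (T : eqType) (s : seq T) (g : T -> nat) :
  s != [::] -> exists2 x, x \in s & forall y, y \in s -> (g y <= g x)%N.
Proof.
elim: s => [//|x [|y t] IH] _.
  by exists x => [|z]; rewrite ?mem_seq1 // => /eqP ->.
have [m mt mmax] := IH isT.
have [gxm | gmx] := leqP (g x) (g m).
  by exists m => [|z]; rewrite inE ?mt ?orbT // => /orP[/eqP -> // | /mmax].
exists x => [|z]; first by rewrite inE eqxx.
by rewrite inE => /orP[/eqP -> // | /mmax/leq_trans/(_ (ltnW gmx))].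
Qed.

Section MaxExponent.
Variables (n : nat) (R : nzRingType).
Implicit Types (p : {mpoly R[n]}) (m u : 'X_{1..n}).

Lemma mcoeffMX_if p u m :
  (p * 'X_[u])@_m = if (u <= m)%MM then p@_(m - u)%MM else 0.
Proof.
case: ifP => [le_um | le_um]; first by rewrite -{1}(submK le_um) addmC mcoeffMX.
apply/eqP; rewrite mcoeff_eq0 (perm_mem (msuppMX p u)).
by apply/mapP => -[m' _ def_m]; rewrite def_m lem_addr in le_um.
Qed.

Lemma mcoeff_sum_varsM_max (f : {mpoly R[n]}) (j : 'I_n) m :
  (forall y, y \in msupp f -> (y j <= m j)%N) ->
  ((\sum_(k < n) 'X_k) * f)@_(U_(j) + m)%MM = f@_m.
Proof.
move=> m_max; rewrite mulr_suml raddf_sum (bigD1 j) //= big1 ?addr0.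
  by rewrite -(commr_mpolyX U_(j) f) mcoeffMX.
move=> k k_neq_j; rewrite -(commr_mpolyX U_(k) f) mcoeffMX_if.
case: ifP => // _; apply/eqP; rewrite mcoeff_eq0; apply/negP => /m_max.
by rewrite mnmBE mnmDE !mnm1E eqxx (negbTE k_neq_j) subn0 add1n ltnn.
Qed.

End MaxExponent.

Theorem lemma3 (R : realType) (n : nat) (f : {mpoly R[n]}) :
  f != 0 -> (n <= size (msupp (sum_vars R n * f)))%N.
Proof.
move=> f_neq0.
have supp_neq0 : msupp f != [::] by rewrite msupp_eq0.
have max_exponent (j : 'I_n) : exists2 m, m \in msupp f &
    forall y, y \in msupp f -> (y j <= m j)%N.
  exact: exists_argmax_seq.
have [M M_supp M_max] := fin_all_exists2 max_exponent.
pose F j := (U_(j) + M j)%MM.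
have F_supp j : F j \in msupp (sum_vars R n * f).
  rewrite mcoeff_msupp /sum_vars mcoeff_sum_varsM_max -?mcoeff_msupp //.
  exact: M_max.
have F_inj : injective F.
  move=> j k /mnmP /(_ j); rewrite !mnmDE !mnm1E eqxx add1n.
  have [-> // | _] := eqVneq k j; rewrite add0n => Mkj.
  by have := M_max j _ (M_supp k); rewrite -Mkj ltnn.
suff : (size (map F (enum 'I_n)) <= size (msupp (sum_vars R n * f)))%N.
  by rewrite size_map size_enum_ord.
apply: uniq_leq_size; first by rewrite map_inj_uniq ?enum_uniq.
by move=> _ /mapP[j _ ->].
Qed.
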